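(* For any two local decompositions $\Gamma_1,\Gamma_2$ (on the same bipartite system), $\phi(\Gamma_1\cdot\Gamma_2)\le\phi(\Gamma_1)\phi(\Gamma_2)$.
   Context: A local decomposition is a finite set $\Gamma=\{(c_i,V_i\otimes W_i):i\in[m]\}$ with $c_i\in\mathbb{R}$, $V_i\in\mathsf{U}(\mathcal{H}_A)$, $W_i\in\mathsf{U}(\mathcal{H}_B)$. Its magnitude is $\phi(\Gamma)=2\|c\|_1^2-\|c\|_2^2$, viewing $c=(c_i)_{i\in[m]}\in\mathbb{R}^m$. The product of $\Gamma_1=\{(a_i,V^{(1)}_i\otimes W^{(1)}_i):i\in[m_1]\}$ and $\Gamma_2=\{(b_j,V^{(2)}_j\otimes W^{(2)}_j):j\in[m_2]\}$ is $\Gamma_1\cdot\Gamma_2=\{(a_ib_j,V^{(1)}_iV^{(2)}_j\otimes W^{(1)}_iW^{(2)}_j):(i,j)\in[m_1]\times[m_2]\}$, with coefficient vector $(a_ib_j)_{(i,j)}$. *)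

From HB Require Import structures.
From mathcomp Require Import all_boot all_order all_algebra.
From mathcomp Require Import complex.
Set Implicit Arguments. Unset Strict Implicit. Unset Printing Implicit Defensive.
Import Order.TTheory GRing.Theory Num.Theory.
Local Open Scope ring_scope.

(* Finite-dimensional Hilbert spaces H_A = C^dA, H_B = C^dB, with C = R[i]
   for a real closed field R (e.g. the reals). *)

Definition adjmx (R : rcfType) (n : nat) (U : 'M[R[i]]_n) : 'M[R[i]]_n :=
  (map_mx (fun z : R[i] => (z^*)%C) U)^T.

Definition unitary (R : rcfType) (n : nat) (U : 'M[R[i]]_n) : Prop :=
  U *m adjmx U = 1%:M /\ adjmx U *m U = 1%:M.

(* A local decomposition {(c_i, V_i ⊗ W_i) : i in I}, indexed by a finite
   type I; the tensor V_i ⊗ W_i is recorded by its two factors. *)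
Record local_decomp (R : rcfType) (dA dB : nat) := LocalDecomp {
  ld_idx : finType;
  ld_c : ld_idx -> R;
  ld_V : ld_idx -> 'M[R[i]]_dA;
  ld_W : ld_idx -> 'M[R[i]]_dB;
  ld_V_unitary : forall i, unitary (ld_V i);
  ld_W_unitary : forall i, unitary (ld_W i)
}.
Arguments ld_idx {R dA dB} _.
Arguments ld_c {R dA dB} _ _.
Arguments ld_V {R dA dB} _ _.
Arguments ld_W {R dA dB} _ _.
Arguments ld_V_unitary {R dA dB} _ _.
Arguments ld_W_unitary {R dA dB} _ _.

Definition magnitude (R : rcfType) (dA dB : nat) (G : local_decomp R dA dB) : R :=
  2 * (\sum_(i : ld_idx G) `|ld_c G i|) ^+ 2 - \sum_(i : ld_idx G) ld_c G i ^+ 2.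

Lemma unitary_mul (R : rcfType) (n : nat) (U V : 'M[R[i]]_n) :
  unitary U -> unitary V -> unitary (U *m V).
Proof.
have adjM : forall (X Y : 'M[R[i]]_n), adjmx (X *m Y) = adjmx Y *m adjmx X.
  by move=> X Y; rewrite /adjmx map_mxM trmx_mul.
move=> [U1 U2] [V1 V2]; rewrite /unitary adjM; split.
  by rewrite mulmxA -(mulmxA U) V1 mulmx1 U1.
by rewrite mulmxA -(mulmxA (adjmx V)) U2 mulmx1 V2.
Qed.

Definition ld_prod (R : rcfType) (dA dB : nat) (G1 G2 : local_decomp R dA dB)
  : local_decomp R dA dB :=
  @LocalDecomp R dA dB (ld_idx G1 * ld_idx G2)%type
    (fun p => ld_c G1 p.1 * ld_c G2 p.2)
    (fun p => ld_V G1 p.1 *m ld_V G2 p.2)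
    (fun p => ld_W G1 p.1 *m ld_W G2 p.2)
    (fun p => unitary_mul (ld_V_unitary G1 p.1) (ld_V_unitary G2 p.2))
    (fun p => unitary_mul (ld_W_unitary G1 p.1) (ld_W_unitary G2 p.2)).

From HB Require Import structures.
From mathcomp Require Import all_boot all_order all_algebra.
From mathcomp Require Import complex ring.
Import Order.TTheory GRing.Theory Num.Theory.
Local Open Scope ring_scope.

(* The l1- and l2-norms of the coefficient vector are multiplicative under
   the product of decompositions, since (a_i b_j) is the tensor product of
   a and b.  Writing A1, A2, B1, B2 for the squared l1-norms and the squared
   l2-norms of the two coefficient vectors,
     phi(G1) phi(G2) - phi(G1 . G2) = 2 (A1 - A2) (B1 - B2),
   which is nonnegative because an l2-norm never exceeds the l1-norm. *)

Lemma sum_pair_mul (R : comPzSemiRingType) (I J : finType) (F : I -> R) (G : J -> R) :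
  \sum_(p : I * J) F p.1 * G p.2 = (\sum_i F i) * (\sum_j G j).
Proof. by rewrite big_distrlr pair_bigA. Qed.

Lemma sum_sqr_le_sqr_sum_norm (R : realDomainType) (I : finType) (c : I -> R) :
  \sum_i c i ^+ 2 <= (\sum_i `|c i|) ^+ 2.
Proof.
rewrite expr2 mulr_suml; apply: ler_sum => i _.
rewrite -real_normK ?num_real // expr2 ler_wpM2l //.
by rewrite (bigD1 i) //= lerDl sumr_ge0.
Qed.

Lemma magnitude_mul_le (R : realDomainType) (a1 a2 b1 b2 : R) :
  a2 <= a1 ^+ 2 -> b2 <= b1 ^+ 2 ->
  2 * (a1 * b1) ^+ 2 - a2 * b2 <= (2 * a1 ^+ 2 - a2) * (2 * b1 ^+ 2 - b2).
Proof.
move=> le_a le_b; rewrite -subr_ge0.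
have -> : (2 * a1 ^+ 2 - a2) * (2 * b1 ^+ 2 - b2) - (2 * (a1 * b1) ^+ 2 - a2 * b2)
    = 2 * ((a1 ^+ 2 - a2) * (b1 ^+ 2 - b2)) by ring.
by rewrite mulr_ge0 // mulr_ge0 // subr_ge0.
Qed.

Theorem lemma2 (R : rcfType) (dA dB : nat) (G1 G2 : local_decomp R dA dB) :
  magnitude (ld_prod G1 G2) <= magnitude G1 * magnitude G2.
Proof.
rewrite /magnitude /=.
under eq_bigr do rewrite normrM.
under [X in _ - X]eq_bigr do rewrite exprMn.
(* The index type [ld_idx (ld_prod G1 G2)] is only convertible to a product,
   so the instances must be given for the rewrites to match. *)
rewrite (@sum_pair_mul _ _ _ (fun i => `|ld_c G1 i|) (fun j => `|ld_c G2 j|)).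
rewrite (@sum_pair_mul _ _ _ (fun i => ld_c G1 i ^+ 2) (fun j => ld_c G2 j ^+ 2)).
by apply: magnitude_mul_le; apply: sum_sqr_le_sqr_sum_norm.
Qed.
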